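(* Let $P$ be a continuous poset and $M$ a persistence module over $P$. Then there are natural isomorphisms $\underline{M}\cong j^!j_*M$ and $\overline{M}\cong j^*j_*M$. Under these isomorphisms the unit $M\to j^!j_*M$ of the adjunction $j_*\dashv j^!$ corresponds to the canonical morphism $M\to\underline M$, and the counit $j^*j_*M\to M$ of the adjunction $j^*\dashv j_*$ corresponds to the canonical morphism $\overline M\to M$.
   Context: Let $P$ be a poset, regarded as a category with a unique morphism $p\to q$ iff $p\le q$. A subset $D\subseteq P$ is directed if it is nonempty and any two elements of $D$ have an upper bound in $D$. For $x,y\in P$, $x\ll y$ ($x$ way below $y$) if for every directed $D$ whose supremum exists with $y\le\sup D$ there is $d\in D$ with $x\le d$. Write ${\twoheaddownarrow}p=\{x:x\ll p\}$, ${\twoheaduparrow}p=\{x:p\ll x\}$, $U_p=\{x:x\ge p\}$. $P$ is continuous if each ${\twoheaddownarrow}p$ is directed with supremum $p$. $P^a$: $P$ with the Alexandrov topology (open sets = up-sets). A set $U$ is Scott-open if it is an up-set meeting every directed set whose supremum exists and lies in $U$; $P^\sigma$: $P$ with the Scott topology; $\mathrm{Int}$ = Scott interior (for continuous $P$, $\mathrm{Int}\,U_p={\twoheaduparrow}p$). $k$ is a commutative ring with unity; a persistence module is a functor $M$ from $P$ to $k$-modules; $\mathrm{Fun}(P,\mathrm{Mod}_k)$ their category. For an up-set $U$, $M(U)=\varprojlim_{x\in U}M_x$ (the sections of the associated sheaf $M^\dagger$ on $P^a$). Scott sheaves: sheaves of $k$-modules on $P^\sigma$. $j\colon P^a\to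 P^\sigma$ is the identity; $j_*M$ is the Scott sheaf $U\mapsto M(U)$; $j^*\mathcal F$ is the persistence module of stalks $p\mapsto\mathcal F_p$; $j^!\mathcal F$ is the persistence module $p\mapsto\mathcal F(\mathrm{Int}\,U_p)$ with restrictions. For continuous $P$, $j^*\dashv j_*\dashv j^!$ are adjoint. For a persistence module $M$ define persistence modules $\underline M_p=\varprojlim_{x\gg p}M_x$ and $\overline M_p=\varinjlim_{x\ll p}M_x$ (internal maps from universal properties), with canonical morphisms $M\to\underline M$ and $\overline M\to M$. *)

(* Limits / colimits of k-modules are described by their universal properties;
   all universal objects appearing in the statement are "chosen" data packed in
   the record [jdata M] together with their defining properties. *)
From HB Require Import structures.
From mathcomp Require Import all_boot all_order all_algebra.
Set Implicit Arguments. Unset Strict Implicit. Unset Printing Implicit Defensive.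
Import Order.TTheory GRing.Theory.
Local Open Scope order_scope.

Section PosetDefs.
Context {d : Order.disp_t} {P : porderType d}.

Definition pdirected (D : P -> Prop) : Prop :=
  (exists x, D x) /\
  forall x y, D x -> D y -> exists z, [/\ D z, x <= z & y <= z].

Definition is_sup (D : P -> Prop) (s : P) : Prop :=
  (forall x, D x -> x <= s) /\ (forall u, (forall x, D x -> x <= u) -> s <= u).

Definition way_below (x y : P) : Prop :=
  forall (D : P -> Prop) (s : P), pdirected D -> is_sup D s -> y <= s ->
    exists2 z, D z & x <= z.

Definition upset (p : P) : P -> Prop := fun x => p <= x.

Definition is_upset (U : P -> Prop) : Prop := forall x y, U x -> x <= y -> U y.

Definition scott_open (U : P -> Prop) : Prop :=
  is_upset U /\
  forall (D : P -> Prop) (s : P), pdirected D -> is_sup D s -> U s ->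
    exists2 z, D z & U z.

Definition scott_int (U : P -> Prop) : P -> Prop :=
  fun x => exists V, [/\ scott_open V, (forall y, V y -> U y) & V x].

Definition nbhd (p : P) (U : P -> Prop) : Prop := scott_open U /\ U p.

Definition subp (V U : P -> Prop) : Prop := forall x, V x -> U x.

End PosetDefs.

Definition continuous_poset {d : Order.disp_t} (P : porderType d) : Prop :=
  forall p : P, pdirected (fun x => way_below x p) /\ is_sup (fun x => way_below x p) p.

Section Modules.
Context {d : Order.disp_t} {P : porderType d} {k : comPzRingType}.

Record pmod := PMod {
  pobj :> P -> lmodType k;
  pmap : forall p q : P, p <= q -> {linear pobj p -> pobj q};
  pmap_id : forall (p : P) (h : p <= p) m, pmap h m = m;
  pmap_comp : forall (p q r : P) (h1 : p <= q) (h2 : q <= r) (h3 : p <= r) m,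
      pmap h3 m = pmap h2 (pmap h1 m)
}.

Arguments pmap M {p q} h : rename.
Definition pmorph (M N : pmod) (f : forall p, {linear M p -> N p}) : Prop :=
  forall (p q : P) (h : p <= q) m, f q (pmap M h m) = pmap N h (f p m).

Definition is_cone (M : pmod) (A : P -> Prop) (L : lmodType k)
  (pi : forall x, A x -> {linear L -> M x}) : Prop :=
  forall (x y : P) (hx : A x) (hy : A y) (h : x <= y) l,
    pmap M h (pi x hx l) = pi y hy l.

Definition is_limit (M : pmod) (A : P -> Prop) (L : lmodType k)
  (pi : forall x, A x -> {linear L -> M x}) : Prop :=
  @is_cone M A L pi /\
  forall (N : lmodType k) (c : forall x, A x -> {linear N -> M x}),
    @is_cone M A N c ->
    exists u : {linear N -> L},
      (forall x (hx : A x) n, pi x hx (u n) = c x hx n) /\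
      (forall u' : {linear N -> L}, (forall x (hx : A x) n, pi x hx (u' n) = c x hx n) ->
         forall n, u' n = u n).

End Modules.
Arguments pmap {d P k} M {p q} h : rename.
Arguments is_cone {d P k} M A L pi.
Arguments is_limit {d P k} M A L pi.
Arguments pmorph {d P k} M N f.

Section Colimits.
Context {k : comPzRingType}.

Definition is_cocone {I : Type} (A : I -> Prop) (R : I -> I -> Prop)
  (F : I -> lmodType k) (g : forall i j, R i j -> {linear F i -> F j})
  (C : lmodType k) (c : forall i, A i -> {linear F i -> C}) : Prop :=
  forall i j (hi : A i) (hj : A j) (h : R i j) x, c j hj (g i j h x) = c i hi x.

Definition is_colimit {I : Type} (A : I -> Prop) (R : I -> I -> Prop)
  (F : I -> lmodType k) (g : forall i j, R i j -> {linear F i -> F j})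
  (C : lmodType k) (c : forall i, A i -> {linear F i -> C}) : Prop :=
  @is_cocone I A R F g C c /\
  forall (N : lmodType k) (c' : forall i, A i -> {linear F i -> N}),
    @is_cocone I A R F g N c' ->
    exists u : {linear C -> N},
      (forall i (hi : A i) x, u (c i hi x) = c' i hi x) /\
      (forall u' : {linear C -> N}, (forall i (hi : A i) x, u' (c i hi x) = c' i hi x) ->
         forall y, u' y = u y).

End Colimits.
Arguments is_cocone {k I} A R F g C c.
Arguments is_colimit {k I} A R F g C c.

Section JData.
Context {d : Order.disp_t} {P : porderType d} {k : comPzRingType}.

(* All the (co)limits needed for M, chosen, together with their structure maps:
   - underline M (U_...), with canonical map M -> underline M (U_can);
   - overline M (O_...), with canonical map overline M -> M (O_can);
   - the Scott sheaf j_* M : U |-> M(U) = lim_{x in U} M_x with restrictions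
     (S_...);  j^! j_* M at p is S_obj (scott_int (upset p));
   - the unit M -> j^! j_* M of j_* -| j^! (J_unit);
   - the stalks (j^* j_* M)_p = colim_{U Scott open, p in U} M(U) (St_...),
     with the counit j^* j_* M -> M of j^* -| j_* (St_counit). *)
Record jdata (M : @pmod d P k) := JData {
  U_obj : P -> lmodType k;
  U_pi : forall p x : P, way_below p x -> {linear U_obj p -> M x};
  U_lim : forall p, is_limit M (way_below p) (U_obj p) (@U_pi p);
  U_map : forall p q : P, p <= q -> {linear U_obj p -> U_obj q};
  U_map_spec : forall (p q : P) (h : p <= q) x (hq : way_below q x) (hp : way_below p x) l,
      U_pi hq (U_map h l) = U_pi hp l;
  U_can : forall p, {linear M p -> U_obj p};
  U_can_spec : forall (p x : P) (hx : way_below p x) (h : p <= x) m,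
      U_pi hx (U_can p m) = pmap M h m;

  O_obj : P -> lmodType k;
  O_in : forall p x : P, way_below x p -> {linear M x -> O_obj p};
  O_colim : forall p, is_colimit (fun x => way_below x p) (fun x y : P => x <= y)
                                 (pobj M) (fun x y (h : x <= y) => pmap M h) (O_obj p) (@O_in p);
  O_map : forall p q : P, p <= q -> {linear O_obj p -> O_obj q};
  O_map_spec : forall (p q : P) (h : p <= q) x (hp : way_below x p) (hq : way_below x q) m,
      O_map h (O_in hp m) = O_in hq m;
  O_can : forall p, {linear O_obj p -> M p};
  O_can_spec : forall (p x : P) (hx : way_below x p) (h : x <= p) m,
      O_can p (O_in hx m) = pmap M h m;

  S_obj : (P -> Prop) -> lmodType k;
  S_pi : forall (U : P -> Prop) x, U x -> {linear S_obj U -> M x};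
  S_lim : forall U, is_limit M U (S_obj U) (@S_pi U);
  S_res : forall U V : P -> Prop, subp V U -> {linear S_obj U -> S_obj V};
  S_res_spec : forall (U V : P -> Prop) (h : subp V U) x (hV : V x) (hU : U x) s,
      S_pi hV (S_res h s) = S_pi hU s;

  J_unit : forall p : P, {linear M p -> S_obj (scott_int (upset p))};
  J_unit_spec : forall (p x : P) (hx : scott_int (upset p) x) (h : p <= x) m,
      S_pi hx (J_unit p m) = pmap M h m;

  St_obj : P -> lmodType k;
  St_in : forall (p : P) (U : P -> Prop), nbhd p U -> {linear S_obj U -> St_obj p};
  St_colim : forall p, is_colimit (nbhd p) (fun U V => subp V U) S_obj (fun U V h => S_res h)
                                  (St_obj p) (@St_in p);
  St_map : forall p q : P, p <= q -> {linear St_obj p -> St_obj q};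
  St_map_spec : forall (p q : P) (h : p <= q) U (hp : nbhd p U) (hq : nbhd q U) s,
      St_map h (St_in hp s) = St_in hq s;
  St_counit : forall p, {linear St_obj p -> M p};
  St_counit_spec : forall (p : P) U (hU : nbhd p U) (hp : U p) s,
      St_counit p (St_in hU s) = S_pi hp s
}.

End JData.

(* In a continuous poset the Scott interior of the principal up-set U_p is
   the way-above set of p, so j^! j_* M at p is the limit of M over {x | p << x},
   which is the definition of the underline module.  Dually, every Scott
   neighbourhood U of p contains some x << p, and then contains Int U_x; hence
   the Scott neighbourhoods Int U_x (x << p) are cofinal among all of them, and
   the stalk of j_* M at p is the colimit over x << p of
   M(Int U_x) = lim_{y >> x} M_y, which the directedness of {x | x << p}
   identifies with colim_{x << p} M_x.  All the comparison maps are induced by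
   universal properties, so the compatibilities follow from the uniqueness
   parts of those properties. *)
From Pilot Require Import Defs.
From HB Require Import structures.
From mathcomp Require Import all_boot all_order all_algebra.
From Stdlib Require Import ProofIrrelevance ClassicalEpsilon.
Set Implicit Arguments. Unset Strict Implicit.
Import Order.TTheory GRing.Theory.
Local Open Scope order_scope.

Section WayBelow.
Context {d : Order.disp_t} {P : porderType d}.

Lemma way_below_le (x y : P) : way_below x y -> x <= y.
Proof.
move=> xy.
have dir1 : pdirected (fun z => z = y).
  by split; [exists y | move=> a b -> ->; exists y].
have sup1 : is_sup (fun z => z = y) y by split; [move=> a -> | move=> u; apply].
by have [z -> //] := xy _ y dir1 sup1 (lexx y).
Qed.

Lemma le_way_below_trans (x y z : P) : x <= y -> way_below y z -> way_below x z.
Proof.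
move=> xy yz D s dirD supD zs; have [w Dw yw] := yz D s dirD supD zs.
by exists w => //; apply: le_trans yw.
Qed.

Lemma way_below_le_trans (x y z : P) : way_below x y -> y <= z -> way_below x z.
Proof. by move=> xy yz D s dirD supD zs; apply: xy D s dirD supD (le_trans yz zs). Qed.

Lemma scott_int_upset_le (p x : P) : scott_int (upset p) x -> p <= x.
Proof. by case=> V [_ VU Vx]; apply: VU. Qed.

Lemma scott_int_open (U : P -> Prop) : scott_open (scott_int U).
Proof.
split.
  move=> x y [V [[upV dirV] VU Vx]] xy.
  by exists V; split => //; apply: upV Vx xy.
move=> D s dirD supD [V [[upV dirV] VU Vs]].
have [z Dz Vz] := dirV D s dirD supD Vs.
by exists z => //; exists V.
Qed.

Lemma scott_int_upset_le_sub (x y : P) :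
  x <= y -> subp (scott_int (upset y)) (scott_int (upset x)).
Proof.
move=> xy z [V [openV VU Vz]]; exists V; split => // w /VU yw.
exact: le_trans xy yw.
Qed.

Lemma scott_int_upset_sub (z : P) (U : P -> Prop) :
  is_upset U -> U z -> subp (scott_int (upset z)) U.
Proof. by move=> upU Uz y /scott_int_upset_le zy; apply: upU Uz zy. Qed.

Hypothesis contP : continuous_poset P.

Lemma scott_int_upset_way_below (p x : P) : scott_int (upset p) x -> way_below p x.
Proof.
case=> V [[_ dirV] VU Vx].
have [dir sup] := contP x.
have [z zx Vz] := dirV _ _ dir sup Vx.
exact: le_way_below_trans (VU _ Vz) zx.
Qed.

(* s is also the directed supremum of all y << e with e in D, so p << s
   already lies below such a y. *)
Lemma way_below_scott_open (p : P) : scott_open (way_below p).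
Proof.
split; first by move=> x y px xy; apply: way_below_le_trans px xy.
move=> D s dirD supD ps.
pose D' y := exists2 e, D e & way_below y e.
have dirD' : pdirected D'.
  split.
    have [[e De] _] := dirD; have [[[y ye] _] _] := contP e.
    by exists y; exists e.
  move=> y1 y2 [e1 De1 y1e1] [e2 De2 y2e2].
  have [e [De e1e e2e]] := dirD.2 _ _ De1 De2.
  have [[_ dirE] _] := contP e.
  have [y [ye y1y y2y]] :=
    dirE _ _ (way_below_le_trans y1e1 e1e) (way_below_le_trans y2e2 e2e).
  by exists y; split => //; exists e.
have supD' : is_sup D' s.
  split; first by move=> y [e De ye]; apply: le_trans (way_below_le ye) (supD.1 _ De).
  move=> u D'u; apply: supD.2 => e De.
  have [_ [_ supE]] := contP e; apply: supE => y ye; apply: D'u; by exists e.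
have [y [e De ye] py] := ps D' s dirD' supD' (lexx s).
by exists e => //; apply: le_way_below_trans py ye.
Qed.

Lemma way_below_scott_int_upset (p x : P) : way_below p x -> scott_int (upset p) x.
Proof.
move=> px; exists (way_below p); split => //; first exact: way_below_scott_open.
by move=> y /way_below_le.
Qed.

Lemma way_below_nbhd (p x : P) : way_below x p -> nbhd p (scott_int (upset x)).
Proof. by move=> xp; split; [apply: scott_int_open | apply: way_below_scott_int_upset]. Qed.

Lemma nbhd_way_below (p : P) (U : P -> Prop) :
  nbhd p U -> exists z, way_below z p /\ U z.
Proof.
case=> [[_ dirU] Up]; have [dir sup] := contP p.
by have [z zp Uz] := dirU _ _ dir sup Up; exists z.
Qed.

End WayBelow.

Section UniversalProperties.
Context {k : comPzRingType}.

Lemma limit_factor {d : Order.disp_t} {P : porderType d} (M : @pmod d P k)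
    (A : P -> Prop) L pi (limL : is_limit M A L pi) (N : lmodType k) c :
  is_cone M A N c -> {u : {linear N -> L} | forall x (hx : A x) n, pi x hx (u n) = c x hx n}.
Proof.
move=> coneN; apply: constructive_indefinite_description.
by have [u [piu _]] := limL.2 N c coneN; exists u.
Qed.

Lemma limit_ext {d : Order.disp_t} {P : porderType d} (M : @pmod d P k)
    (A : P -> Prop) L pi (limL : is_limit M A L pi) (N : lmodType k) (f g : {linear N -> L}) :
  (forall x (hx : A x) n, pi x hx (f n) = pi x hx (g n)) -> forall n, f n = g n.
Proof.
move=> pifg n.
pose c x (hx : A x) := (pi x hx \o f : {linear N -> M x}).
have coneN : is_cone M A N c by move=> x y hx hy h l; rewrite /c /= (limL.1 x y hx hy h).
have [u [_ uniq]] := limL.2 N c coneN.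
by rewrite (uniq f _ n) ?(uniq g _ n) // => x hx m; rewrite /c /= pifg.
Qed.

Lemma colimit_factor {I : Type} (A : I -> Prop) R (F : I -> lmodType k) g C c
    (colimC : is_colimit A R F g C c) (N : lmodType k) c' :
  is_cocone A R F g N c' -> {u : {linear C -> N} | forall i (hi : A i) x, u (c i hi x) = c' i hi x}.
Proof.
move=> coconeN; apply: constructive_indefinite_description.
by have [u [uc _]] := colimC.2 N c' coconeN; exists u.
Qed.

Lemma colimit_ext {I : Type} (A : I -> Prop) R (F : I -> lmodType k) g C c
    (colimC : is_colimit A R F g C c) (N : lmodType k) (f1 f2 : {linear C -> N}) :
  (forall i (hi : A i) x, f1 (c i hi x) = f2 (c i hi x)) -> forall y, f1 y = f2 y.
Proof.
move=> f12 y.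
pose c' i (hi : A i) := (f1 \o c i hi : {linear F i -> N}).
have coconeN : is_cocone A R F g N c'.
  by move=> i j hi hj h x; rewrite /c' /= (colimC.1 i j hi hj h).
have [u [_ uniq]] := colimC.2 N c' coconeN.
by rewrite (uniq f1 _ y) ?(uniq f2 _ y) // => i hi m; rewrite /c' /= f12.
Qed.

End UniversalProperties.

Arguments limit_ext {k d P M A L pi} limL {N} f g _ _.
Arguments colimit_ext {k I A R F g C c} colimC {N} f1 f2 _ _.

Section Comparison.
Context {d : Order.disp_t} {P : porderType d} {k : comPzRingType}.
Hypothesis contP : continuous_poset P.

Section Data.
Variables (M : @pmod d P k) (D : jdata M).

Lemma U_pi_irr p x (h1 h2 : way_below p x) l : U_pi D h1 l = U_pi D h2 l.
Proof. by rewrite (proof_irrelevance _ h1 h2). Qed.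

Lemma S_pi_irr U x (h1 h2 : U x) s : S_pi D h1 s = S_pi D h2 s.
Proof. by rewrite (proof_irrelevance _ h1 h2). Qed.

Lemma S_res_J_unit x y (xy : x <= y)
    (sub : subp (scott_int (upset y)) (scott_int (upset x))) m :
  S_res D sub (J_unit D x m) = J_unit D y (Defs.pmap M xy m).
Proof.
apply: (limit_ext (S_lim D _) (S_res D sub \o J_unit D x) (J_unit D y \o Defs.pmap M xy))
  => z hz n /=.
rewrite (S_res_spec _ _ (sub _ hz)) (J_unit_spec D _ (le_trans xy (scott_int_upset_le hz))).
rewrite (J_unit_spec D _ (scott_int_upset_le hz)); exact: pmap_comp.
Qed.

Lemma alpha_cone p :
  is_cone M (scott_int (upset p)) (U_obj D p)
    (fun x hx => U_pi D (scott_int_upset_way_below contP hx)).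
Proof. by move=> x y hx hy xy l; apply: (U_lim D p).1. Qed.

Definition alpha p : {linear U_obj D p -> S_obj D (scott_int (upset p))} :=
  sval (limit_factor (S_lim D _) (@alpha_cone p)).

Lemma S_pi_alpha p x (hx : scott_int (upset p) x) l :
  S_pi D hx (alpha p l) = U_pi D (scott_int_upset_way_below contP hx) l.
Proof. exact: (svalP (limit_factor (S_lim D _) (@alpha_cone p))). Qed.

Lemma alpha_inv_cone p :
  is_cone M (way_below p) (S_obj D (scott_int (upset p)))
    (fun x hx => S_pi D (way_below_scott_int_upset contP hx)).
Proof. by move=> x y hx hy xy l; apply: (S_lim D _).1. Qed.

Lemma alpha_bij p : bijective (alpha p).
Proof.
have [inv U_pi_inv] := limit_factor (U_lim D p) (@alpha_inv_cone p).
exists inv => l.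
  apply: (limit_ext (U_lim D p) (inv \o alpha p) idfun) => x hx n /=.
  by rewrite U_pi_inv S_pi_alpha U_pi_irr.
apply: (limit_ext (S_lim D _) (alpha p \o inv) idfun) => x hx n /=.
by rewrite S_pi_alpha U_pi_inv S_pi_irr.
Qed.

Lemma alpha_U_map p q (pq : p <= q)
    (sub : subp (scott_int (upset q)) (scott_int (upset p))) l :
  alpha q (U_map D pq l) = S_res D sub (alpha p l).
Proof.
apply: (limit_ext (S_lim D _) (alpha q \o U_map D pq) (S_res D sub \o alpha p)) => x hx n /=.
rewrite S_pi_alpha (S_res_spec _ _ (sub _ hx)) S_pi_alpha.
exact: U_map_spec.
Qed.

Lemma alpha_U_can p m : alpha p (U_can D p m) = J_unit D p m.
Proof.
apply: (limit_ext (S_lim D _) (alpha p \o U_can D p) (J_unit D p)) => x hx n /=.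
rewrite S_pi_alpha (J_unit_spec D _ (scott_int_upset_le hx)); exact: U_can_spec.
Qed.

Lemma beta_cocone p :
  is_cocone (fun x => way_below x p) (fun x y : P => x <= y) (pobj M)
    (fun x y (xy : x <= y) => Defs.pmap M xy) (St_obj D p)
    (fun x xp => (St_in D (way_below_nbhd contP xp) \o J_unit D x : {linear M x -> St_obj D p})).
Proof.
move=> x y xp yp xy m /=.
rewrite -(S_res_J_unit xy (scott_int_upset_le_sub xy)).
exact: (St_colim D p).1.
Qed.

Definition beta p : {linear O_obj D p -> St_obj D p} :=
  sval (colimit_factor (O_colim D p) (@beta_cocone p)).

Lemma beta_O_in p x (xp : way_below x p) m :
  beta p (O_in D xp m) = St_in D (way_below_nbhd contP xp) (J_unit D x m).
Proof. exact: (svalP (colimit_factor (O_colim D p) (@beta_cocone p)) x xp m). Qed.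

(* Directedness of {x | x << p} makes this class independent of the chosen z. *)
Lemma O_in_S_pi_indep p (U : P -> Prop) (upU : is_upset U) z1 z2
    (z1p : way_below z1 p) (z2p : way_below z2 p) (u1 : U z1) (u2 : U z2) s :
  O_in D z1p (S_pi D u1 s) = O_in D z2p (S_pi D u2 s).
Proof.
have [[_ dirp] _] := contP p.
have [z [zp z1z z2z]] := dirp _ _ z1p z2p.
have uz : U z by apply: upU u1 z1z.
rewrite -((O_colim D p).1 _ _ z1p zp z1z) -((O_colim D p).1 _ _ z2p zp z2z) /=.
by rewrite ((S_lim D U).1 _ _ u1 uz) ((S_lim D U).1 _ _ u2 uz).
Qed.

Lemma beta_inverse p : {inv : {linear St_obj D p -> O_obj D p} |
  forall U (hU : nbhd p U) z (zp : way_below z p) (uz : U z) s,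
    inv (St_in D hU s) = O_in D zp (S_pi D uz s)}.
Proof.
have pick U : nbhd p U -> {z | way_below z p /\ U z}.
  by move=> hU; apply: constructive_indefinite_description; apply: nbhd_way_below.
pose c U (hU : nbhd p U) :=
  (O_in D (proj1 (svalP (pick U hU))) \o S_pi D (proj2 (svalP (pick U hU)))
    : {linear S_obj D U -> O_obj D p}).
have coconeO : is_cocone (nbhd p) (fun U V => subp V U) (S_obj D) (fun U V h => S_res D h) _ c.
  move=> U V hU hV VU s; rewrite /c /= (S_res_spec _ _ (VU _ (proj2 (svalP (pick V hV))))).
  exact: O_in_S_pi_indep hU.1.1 _ _ _ _ _ _ _.
have [inv inv_in] := colimit_factor (St_colim D p) coconeO.
exists inv => U hU z zp uz s; rewrite inv_in /c /=.
exact: O_in_S_pi_indep hU.1.1 _ _ _ _ _ _ _.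
Qed.

Lemma beta_bij p : bijective (beta p).
Proof.
have [inv inv_in] := beta_inverse p.
exists inv.
  move=> o; apply: (colimit_ext (O_colim D p) (inv \o beta p) idfun) => x xp m /=.
  rewrite beta_O_in.
  have [z [zp hz]] := nbhd_way_below contP (way_below_nbhd contP xp).
  rewrite (inv_in _ _ _ zp hz) (J_unit_spec D _ (scott_int_upset_le hz)).
  exact: (O_colim D p).1.
move=> t; apply: (colimit_ext (St_colim D p) (beta p \o inv) idfun) => U hU s /=.
have [z [zp uz]] := nbhd_way_below contP hU.
have sub : subp (scott_int (upset z)) U by apply: scott_int_upset_sub hU.1.1 uz.
rewrite (inv_in _ _ _ zp uz) beta_O_in.
rewrite -((St_colim D p).1 _ _ hU (way_below_nbhd contP zp) sub s) /=.
congr (St_in D _ _).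
apply: (limit_ext (S_lim D _) (J_unit D z \o S_pi D uz) (S_res D sub)) => y hy n /=.
rewrite (S_res_spec _ _ (sub _ hy)) (J_unit_spec D _ (scott_int_upset_le hy)).
exact: (S_lim D U).1.
Qed.

Lemma beta_O_map p q (pq : p <= q) o : beta q (O_map D pq o) = St_map D pq (beta p o).
Proof.
apply: (colimit_ext (O_colim D p) (beta q \o O_map D pq) (St_map D pq \o beta p)) => x xp m /=.
have xq := way_below_le_trans xp pq.
rewrite (O_map_spec D pq xp xq) !beta_O_in.
by rewrite (St_map_spec _ _ (way_below_nbhd contP xq)).
Qed.

Lemma St_counit_beta p o : St_counit D p (beta p o) = O_can D p o.
Proof.
apply: (colimit_ext (O_colim D p) (St_counit D p \o beta p) (O_can D p)) => x xp m /=.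
rewrite beta_O_in (St_counit_spec _ (way_below_scott_int_upset contP xp)).
by rewrite (J_unit_spec D _ (way_below_le xp)) (O_can_spec D _ (way_below_le xp)).
Qed.

End Data.

Section Morphism.
Variables (M N : @pmod d P k) (DM : jdata M) (DN : jdata N).
Variables (f : forall p, {linear M p -> N p}) (sf : forall U, {linear S_obj DM U -> S_obj DN U}).
Hypothesis S_pi_sf :
  forall (U : P -> Prop) (x : P) (hx : U x) s, S_pi DN hx (sf U s) = f x (S_pi DM hx s).

Lemma alpha_morph (uf : forall p, {linear U_obj DM p -> U_obj DN p}) :
  (forall (p x : P) (hx : way_below p x) l, U_pi DN hx (uf p l) = f x (U_pi DM hx l)) ->
  forall p l, alpha DN p (uf p l) = sf _ (alpha DM p l).
Proof.
move=> U_pi_uf p l.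
apply: (limit_ext (S_lim DN _) (alpha DN p \o uf p) (sf _ \o alpha DM p)) => x hx n /=.
by rewrite S_pi_alpha U_pi_uf S_pi_sf S_pi_alpha.
Qed.

Lemma J_unit_morph x m : pmorph M N f -> J_unit DN x (f x m) = sf _ (J_unit DM x m).
Proof.
move=> morph_f.
apply: (limit_ext (S_lim DN _) (J_unit DN x \o f x) (sf _ \o J_unit DM x)) => z hz n /=.
by rewrite S_pi_sf !(J_unit_spec _ _ (scott_int_upset_le hz)) morph_f.
Qed.

Lemma beta_morph (of_ : forall p, {linear O_obj DM p -> O_obj DN p})
    (stf : forall p, {linear St_obj DM p -> St_obj DN p}) :
  pmorph M N f ->
  (forall (p x : P) (hx : way_below x p) m, of_ p (O_in DM hx m) = O_in DN hx (f x m)) ->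
  (forall (p : P) (U : P -> Prop) (hU : nbhd p U) s,
      stf p (St_in DM hU s) = St_in DN hU (sf U s)) ->
  forall p o, beta DN p (of_ p o) = stf p (beta DM p o).
Proof.
move=> morph_f of_O_in stf_St_in p o.
apply: (colimit_ext (O_colim DM p) (beta DN p \o of_ p) (stf p \o beta DM p)) => x xp m /=.
by rewrite of_O_in !beta_O_in stf_St_in J_unit_morph.
Qed.

End Morphism.
End Comparison.

Theorem mainTheorem2 (d : Order.disp_t) (P : porderType d) (k : comPzRingType) :
  continuous_poset P ->
  exists (alpha : forall (M : @pmod d P k) (D : jdata M) (p : P),
            {linear U_obj D p -> S_obj D (scott_int (upset p))})
         (beta : forall (M : @pmod d P k) (D : jdata M) (p : P),
            {linear O_obj D p -> St_obj D p}),
  (forall M (D : jdata M) p, bijective (alpha M D p)) /\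
  (forall M (D : jdata M) p, bijective (beta M D p)) /\
  (forall M (D : jdata M) (p q : P) (h : p <= q)
          (hi : subp (scott_int (upset q)) (scott_int (upset p))) l,
      alpha M D q (U_map D h l) = S_res D hi (alpha M D p l)) /\
  (forall M (D : jdata M) (p q : P) (h : p <= q) o,
      beta M D q (O_map D h o) = St_map D h (beta M D p o)) /\
  (forall (M N : @pmod d P k) (DM : jdata M) (DN : jdata N)
          (f : forall p, {linear M p -> N p}),
      pmorph M N f ->
      forall (uf : forall p, {linear U_obj DM p -> U_obj DN p})
             (sf : forall U, {linear S_obj DM U -> S_obj DN U}),
      (forall (p x : P) (hx : way_below p x) l, U_pi DN hx (uf p l) = f x (U_pi DM hx l)) ->
      (forall (U : P -> Prop) (x : P) (hx : U x) s, S_pi DN hx (sf U s) = f x (S_pi DM hx s)) ->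
      forall p l, alpha N DN p (uf p l) = sf _ (alpha M DM p l)) /\
  (forall (M N : @pmod d P k) (DM : jdata M) (DN : jdata N)
          (f : forall p, {linear M p -> N p}),
      pmorph M N f ->
      forall (of_ : forall p, {linear O_obj DM p -> O_obj DN p})
             (sf : forall U, {linear S_obj DM U -> S_obj DN U})
             (stf : forall p, {linear St_obj DM p -> St_obj DN p}),
      (forall (p x : P) (hx : way_below x p) m, of_ p (O_in DM hx m) = O_in DN hx (f x m)) ->
      (forall (U : P -> Prop) (x : P) (hx : U x) s, S_pi DN hx (sf U s) = f x (S_pi DM hx s)) ->
      (forall (p : P) (U : P -> Prop) (hU : nbhd p U) s,
          stf p (St_in DM hU s) = St_in DN hU (sf U s)) ->
      forall p o, beta N DN p (of_ p o) = stf p (beta M DM p o)) /\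
  (forall M (D : jdata M) p m, alpha M D p (U_can D p m) = J_unit D p m) /\
  (forall M (D : jdata M) p o, St_counit D p (beta M D p o) = O_can D p o).
Proof.
move=> contP.
exists (fun M D => alpha contP D), (fun M D => beta contP D).
split; first by move=> M D; apply: alpha_bij.
split; first by move=> M D; apply: beta_bij.
split; first by move=> M D; apply: alpha_U_map.
split; first by move=> M D; apply: beta_O_map.
split; first by move=> M N DM DN f _ uf sf U_pi_uf S_pi_sf; apply: alpha_morph.
split; first by move=> M N DM DN f morph_f of_ sf stf of_O_in S_pi_sf; apply: beta_morph.
split; first by move=> M D; apply: alpha_U_can.
by move=> M D; apply: St_counit_beta.
Qed.
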